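(* Let $\Bbbk$ be a field, $H$ a Hopf $\Bbbk$-algebra with bijective antipode, $A$ a left $H$-module $\Bbbk$-algebra, and $I$ an $H$-prime ideal of $A$. Then the assignment $P \mapsto \alpha_P$ is a bijection between the set $\{ P \in \operatorname{Spec} A \mid A/P \cong \Bbbk \text{ and } P\!:\!H = I\}$ and the set of embeddings (injective morphisms) $A/I \hookrightarrow H^*$ of $H$-module algebras. Here, for such $P$, $\alpha_P\colon A\to H^*$ is given by $\alpha_P(a)(h) = $ the image of $h.a$ in $A/P=\Bbbk$, and it is regarded as the induced map on $A/I$ (its kernel is $P\!:\!H=I$).
   Context: A left $H$-module algebra is a $\Bbbk$-algebra $A$ with $1$ that is a left $H$-module via $h\otimes a\mapsto h.a$ such that $h.(ab)=(h_1.a)(h_2.b)$ and $h.1=\varepsilon(h)1$; morphisms of $H$-module algebras are algebra maps that are $H$-module maps. An $H$-ideal is a two-sided ideal which is an $H$-submodule; an $H$-ideal $I$ is $H$-prime if $A/I\ne0$ and the product of any two nonzero $H$-ideals of $A/I$ is nonzero. For an ideal $P$, $P\!:\!H=\{a\in A\mid H.a\subseteq P\}$. $H^*=\operatorname{Hom}_\Bbbk(H,\Bbbk)$ is the convolution algebra (product $(fg)(h)=f(h_1)g(h_2)$, unit $\varepsilon$), made into an $H$-module algebra by the hit action $(h \rightharpoonup f)(k) = f(kh)$ for $h,k\in H$, $f \in H^*$. For $P$ with $A/P\cong\Bbbk$, $A/P$ is identified with $\Bbbk$ via the unique algebra isomorphism. *)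

From HB Require Import structures.
From mathcomp Require Import all_boot all_algebra.
Set Implicit Arguments. Unset Strict Implicit. Unset Printing Implicit Defensive.
Import GRing.Theory.
Local Open Scope ring_scope.

Section Defs.
Variable k : fieldType.

Definition klin (V : lmodType k) (f : V -> k) : Prop :=
  forall (c : k) (x y : V), f (c *: x + y) = c * f x + f y.

Definition bilin (V : lmodType k) (b : V -> V -> k) : Prop :=
  (forall x, klin (b x)) /\ (forall y, klin (fun x => b x y)).

Definition trilin (V : lmodType k) (t : V -> V -> V -> k) : Prop :=
  (forall x y, klin (t x y)) /\ (forall x z, klin (fun y => t x y z)) /\
  (forall y z, klin (fun x => t x y z)).

Variable H : algType k.

(* A comultiplication is encoded by choosing, for each h, a finite
   Sweedler representation  Delta h = \sum_i h1_i (x) h2_i  as a list of pairs.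
   Equalities of tensors are expressed by equality under every bilinear
   (trilinear) form with values in k, which over a field characterizes
   equality in H (x) H (resp. H (x) H (x) H). *)
Definition is_hopf (D : H -> seq (H * H)) (e : H -> k) (S : H -> H) : Prop :=
  (forall b, bilin b -> klin (fun h => \sum_(p <- D h) b p.1 p.2)) /\
  (forall t, trilin t -> forall h,
     \sum_(p <- D h) \sum_(q <- D p.1) t q.1 q.2 p.2 =
     \sum_(p <- D h) \sum_(q <- D p.2) t p.1 q.1 q.2) /\
  (forall h, \sum_(p <- D h) e p.1 *: p.2 = h) /\
  (forall h, \sum_(p <- D h) e p.2 *: p.1 = h) /\
  klin e /\ (forall x y, e (x * y) = e x * e y) /\ e 1 = 1 /\
  (forall b, bilin b -> forall x y,
     \sum_(r <- D (x * y)) b r.1 r.2 =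
     \sum_(p <- D x) \sum_(q <- D y) b (p.1 * q.1) (p.2 * q.2)) /\
  (forall b, bilin b -> \sum_(r <- D 1) b r.1 r.2 = b 1 1) /\
  (forall (c : k) x y, S (c *: x + y) = c *: S x + S y) /\
  (forall h, \sum_(p <- D h) S p.1 * p.2 = e h *: 1) /\
  (forall h, \sum_(p <- D h) p.1 * S p.2 = e h *: 1).

Definition bijective_antipode (S : H -> H) : Prop := bijective S.

Variable A : algType k.

Definition is_module_algebra (D : H -> seq (H * H)) (e : H -> k)
  (act : H -> A -> A) : Prop :=
  (forall (c : k) g h a, act (c *: g + h) a = c *: act g a + act h a) /\
  (forall (c : k) h a b, act h (c *: a + b) = c *: act h a + act h b) /\
  (forall a, act 1 a = a) /\
  (forall g h a, act (g * h) a = act g (act h a)) /\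
  (forall h a b, act h (a * b) = \sum_(p <- D h) act p.1 a * act p.2 b) /\
  (forall h, act h 1 = e h *: 1).

Definition is_ideal (I : A -> Prop) : Prop :=
  I 0 /\ (forall x y, I x -> I y -> I (x - y)) /\
  (forall a x, I x -> I (a * x) /\ I (x * a)).

Definition is_H_ideal (act : H -> A -> A) (I : A -> Prop) : Prop :=
  is_ideal I /\ (forall h x, I x -> I (act h x)).

(* I is H-prime: A/I <> 0, and the product of two nonzero H-ideals of A/I is
   nonzero.  H-ideals of A/I are the J/I with J an H-ideal containing I;
   J/I * K/I = 0 iff every product j*k lies in I. *)
Definition is_H_prime (act : H -> A -> A) (I : A -> Prop) : Prop :=
  is_H_ideal act I /\ ~ I 1 /\
  forall J K : A -> Prop, is_H_ideal act J -> is_H_ideal act K ->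
    (forall x, I x -> J x) -> (forall x, I x -> K x) ->
    (forall x y, J x -> K y -> I (x * y)) ->
    (forall x, J x -> I x) \/ (forall x, K x -> I x).

Definition is_prime_ideal (P : A -> Prop) : Prop :=
  is_ideal P /\ ~ P 1 /\
  forall J K : A -> Prop, is_ideal J -> is_ideal K ->
    (forall x y, J x -> K y -> P (x * y)) ->
    (forall x, J x -> P x) \/ (forall x, K x -> P x).

Definition is_alg_char (chi : A -> k) : Prop :=
  klin chi /\ (forall a b, chi (a * b) = chi a * chi b) /\ chi 1 = 1.

Definition colon_H (act : H -> A -> A) (P : A -> Prop) : A -> Prop :=
  fun a => forall h, P (act h a).

(* P in Spec A, A/P ~= k (with chi : A -> A/P = k the quotient map composed
   with the unique algebra isomorphism A/P ~= k, i.e. ker chi = P), and P:H = I *)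
Definition in_S (act : H -> A -> A) (I : A -> Prop) (P : A -> Prop)
  (chi : A -> k) : Prop :=
  is_prime_ideal P /\ is_alg_char chi /\ (forall a, P a <-> chi a = 0) /\
  (forall a, colon_H act P a <-> I a).

Definition alpha (act : H -> A -> A) (chi : A -> k) : A -> H -> k :=
  fun a h => chi (act h a).

(* phi : A -> H^* (H^* = k-linear maps H -> k with convolution product, unit
   e and the hit action (g -> f)(h) = f(h g)) is a morphism of H-module
   algebras whose kernel is exactly I, i.e. phi induces an (injective)
   embedding A/I -> H^* of H-module algebras. *)
Definition is_embedding (D : H -> seq (H * H)) (e : H -> k)
  (act : H -> A -> A) (I : A -> Prop) (phi : A -> H -> k) : Prop :=
  (forall a, klin (phi a)) /\
  (forall (c : k) a b h, phi (c *: a + b) h = c * phi a h + phi b h) /\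
  (forall a b h, phi (a * b) h = \sum_(p <- D h) phi a p.1 * phi b p.2) /\
  (forall h, phi 1 h = e h) /\
  (forall g a h, phi (act g a) h = phi a (h * g)) /\
  (forall a, (forall h, phi a h = 0) <-> I a).

End Defs.

(* Every character [chi] of [A] yields the H-module algebra map [alpha_chi : a |-> (h |-> chi (h.a))]
   into [H^*], and [chi] is recovered as [alpha_chi] followed by evaluation at [1]; the kernel of
   [alpha_chi] is [ker chi : H].  Conversely, evaluation at [1] is an algebra map [H^* -> k]
   (because [Delta 1 = 1 (x) 1] and [e 1 = 1]), so composing an embedding [phi] with it gives a
   character whose kernel [P] is prime and satisfies [P : H = ker phi = I], since
   [phi (h.a) 1 = phi a h]. *)
From HB Require Import structures.
From mathcomp Require Import all_boot all_algebra.
From mathcomp Require Import ring.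
From Stdlib Require Import Classical.
Set Implicit Arguments. Unset Strict Implicit.
Local Open Scope ring_scope.
Import GRing.Theory.

Section KLinear.
Variables (k : fieldType) (V : lmodType k) (f : V -> k).
Hypothesis f_lin : klin f.

Lemma klin0 : f 0 = 0.
Proof.
have := f_lin 1 0 0; rewrite scale1r addr0 mul1r.
by move/(congr1 (fun z => z - f 0)); rewrite addrK subrr.
Qed.

Lemma klinD x y : f (x + y) = f x + f y.
Proof. by have := f_lin 1 x y; rewrite scale1r mul1r. Qed.

Lemma klinZ c x : f (c *: x) = c * f x.
Proof. by have := f_lin c x 0; rewrite addr0 klin0 addr0. Qed.

Lemma klin_sum (I : Type) (s : seq I) (F : I -> V) :
  f (\sum_(i <- s) F i) = \sum_(i <- s) f (F i).
Proof.
elim: s => [|x s IH]; first by rewrite !big_nil klin0.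
by rewrite !big_cons klinD IH.
Qed.

End KLinear.

Section Characters.
Variables (k : fieldType) (A : algType k) (chi : A -> k).
Hypothesis chi_char : is_alg_char chi.

Lemma alg_char_ker_ideal : is_ideal (fun a => chi a = 0).
Proof.
have [chi_lin [chiM _]] := chi_char.
split; [exact: klin0|split].
- move=> x y x0 y0; rewrite -scaleN1r addrC chi_lin x0 y0; ring.
- by move=> a x x0; rewrite !chiM x0 mulr0 mul0r.
Qed.

Lemma alg_char_ker_prime : is_prime_ideal (fun a => chi a = 0).
Proof.
have [_ [chiM chi1]] := chi_char.
split; first exact: alg_char_ker_ideal.
split; first by rewrite chi1; apply/eqP; exact: oner_neq0.
move=> J K _ _ JK0.
case: (classic (forall x, J x -> chi x = 0)) => [J0|J_neq0]; [by left | right].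
move=> y Ky; apply: NNPP => y_neq0; apply: J_neq0 => x Jx.
have := JK0 x y Jx Ky; rewrite chiM => /eqP.
by rewrite mulf_eq0 => /orP[/eqP|/eqP].
Qed.

End Characters.

Section Alpha.
Variables (k : fieldType) (H : algType k) (D : H -> seq (H * H)) (e : H -> k).
Variables (A : algType k) (act : H -> A -> A).
Hypothesis act_modalg : is_module_algebra D e act.

Lemma alpha1 chi a : alpha act chi a 1 = chi a.
Proof. by have [_ [_ [act1 _]]] := act_modalg; rewrite /alpha act1. Qed.

Lemma alpha_embedding (I : A -> Prop) chi :
  is_alg_char chi -> (forall a, colon_H act (fun a => chi a = 0) a <-> I a) ->
  is_embedding D e act I (alpha act chi).
Proof.
move=> [chi_lin [chiM chi1]] colonI.
have [act_linl [act_linr [_ [actM [act_mul act_one]]]]] := act_modalg.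
rewrite /is_embedding /alpha.
split; [|split; [|split; [|split; [|split]]]].
- by move=> a c x y; rewrite act_linl chi_lin.
- by move=> c a b h; rewrite act_linr chi_lin.
- move=> a b h; rewrite act_mul klin_sum //.
  by apply: eq_bigr => p _; rewrite chiM.
- by move=> h; rewrite act_one (klinZ chi_lin) chi1 mulr1.
- by move=> g a h; rewrite actM.
- exact: colonI.
Qed.

Lemma in_S_alpha_inj (I P Q : A -> Prop) chi psi :
  in_S act I P chi -> in_S act I Q psi ->
  (forall a h, alpha act chi a h = alpha act psi a h) -> forall a, P a <-> Q a.
Proof.
move=> [_ [_ [Pchi _]]] [_ [_ [Qpsi _]]] alpha_eq a.
by rewrite Pchi Qpsi -!alpha1 alpha_eq.
Qed.

End Alpha.

Section EvalOne.
Variables (k : fieldType) (H : algType k) (D : H -> seq (H * H)) (e : H -> k) (S : H -> H).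
Hypothesis hopf : is_hopf D e S.
Variables (A : algType k) (act : H -> A -> A) (I : A -> Prop) (phi : A -> H -> k).
Hypothesis phi_emb : is_embedding D e act I phi.

Definition eval1 (a : A) : k := phi a 1.

Lemma eval1_alg_char : is_alg_char eval1.
Proof.
have [phi_lin [phi_linl [phiM [phi1 _]]]] := phi_emb.
have [_ [_ [_ [_ [_ [_ [e1 [_ [D1 _]]]]]]]]] := hopf.
split; [|split].
- by move=> c x y; rewrite /eval1 phi_linl.
- move=> a b; rewrite /eval1 phiM.
  apply: (D1 (fun x y => phi a x * phi b y)).
  by split=> [x|y] c u v; rewrite phi_lin; ring.
- by rewrite /eval1 phi1 e1.
Qed.

Lemma alpha_eval1 a h : alpha act eval1 a h = phi a h.
Proof.
have [_ [_ [_ [_ [phi_act _]]]]] := phi_emb.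
by rewrite /alpha /eval1 phi_act mul1r.
Qed.

Lemma colon_H_ker_eval1 a : colon_H act (fun a => eval1 a = 0) a <-> I a.
Proof.
have [_ [_ [_ [_ [_ phi_ker]]]]] := phi_emb.
rewrite -phi_ker /colon_H; split=> a0 h.
- by rewrite -alpha_eval1; exact: a0.
- by rewrite -[eval1 _]/(alpha act eval1 a h) alpha_eval1.
Qed.

Lemma in_S_ker_eval1 : in_S act I (fun a => eval1 a = 0) eval1.
Proof.
split; first exact: alg_char_ker_prime eval1_alg_char.
by split; [exact: eval1_alg_char | split; [by [] | exact: colon_H_ker_eval1]].
Qed.

End EvalOne.

Theorem proposition3p2 (k : fieldType) (H : algType k)
  (D : H -> seq (H * H)) (e : H -> k) (S : H -> H)
  (hH : is_hopf D e S) (hS : bijective_antipode S)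
  (A : algType k) (act : H -> A -> A) (hA : is_module_algebra D e act)
  (I : A -> Prop) (hI : is_H_prime act I) :
  (* P |-> alpha_P lands in the embeddings A/I -> H^* *)
  (forall P chi, in_S act I P chi -> is_embedding D e act I (alpha act chi)) /\
  (* injectivity *)
  (forall P Q chi psi, in_S act I P chi -> in_S act I Q psi ->
     (forall a h, alpha act chi a h = alpha act psi a h) ->
     forall a, P a <-> Q a) /\
  (* surjectivity *)
  (forall phi, is_embedding D e act I phi ->
     exists P chi, in_S act I P chi /\
       forall a h, alpha act chi a h = phi a h).
Proof.
split; [|split].
- move=> P chi [_ [chi_char [Pchi colonP]]].
  apply: alpha_embedding => // a; rewrite -colonP.
  by split=> Pa h; apply/Pchi.
- exact: (in_S_alpha_inj hA (I:=I)).
- move=> phi phi_emb; exists (fun a => eval1 phi a = 0), (eval1 phi).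
  by split; [exact (in_S_ker_eval1 hH phi_emb) | exact: alpha_eval1 phi_emb].
Qed.
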